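(* Let $\delta:\mathbb{R}\to\mathbb{R}$ be a posterior median function $x\mapsto\delta(x;w,b,c)$ for fixed $(w,b,c)$, and assume it is continuous and that there exist $t_1,t_2>0$ such that $\delta(x)=0$ if and only if $-t_2\le x\le t_1$, $\delta$ is strictly increasing on $(t_1,\infty)$ and on $(-\infty,-t_2)$, and $\delta$ maps $(t_1,\infty)$ onto $(0,\infty)$ and $(-\infty,-t_2)$ onto $(-\infty,0)$. Let $\delta^{-1}(t)$ for $t\ne0$ denote the inverse of $\delta$ restricted to $(t_1,\infty)\cup(-\infty,-t_2)$, and define the penalty $$\mathcal{P}(\theta)=\int_0^{\theta}\bigl(\delta^{-1}(t)-t\bigr)\,dt\ \ (\theta\ne0),\qquad \mathcal{P}(0)=0.$$ Then for every $x\in\mathbb{R}$, the minimizer of $\theta\mapsto\frac12(x-\theta)^2+\mathcal{P}(\theta)$ over $\theta\in\mathbb{R}$ is $\theta=\delta(x)$.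
   Context: Setting: $X\mid\mu\sim N(\mu,1)$ with prior $\mu\sim(1-w)\delta_0+w\,\gamma(\cdot;b,c)$, $\delta_0$ the point mass at $0$ and $\gamma(\cdot;b,c)$ a location-scale density with scale $b>0$ and location $c$; $\delta(x;w,b,c)$ is the posterior median of $\mu$ given $X=x$. The integral $\int_0^\theta$ for $\theta<0$ means $-\int_\theta^0$. *)

From Stdlib Require Import Reals Lra ClassicalEpsilon.
Open Scope R_scope.

(* Oriented Riemann integral \int_a^b f as a total function:
   the (proof-independent) Stdlib RiemannInt when f is Riemann integrable
   on [a,b] (Stdlib's RiemannInt is oriented, so for b < a it equals
   - \int_b^a f), and 0 otherwise (never used in the theorem, where the
   integrand is integrable). *)
Definition RInt (f : R -> R) (a b : R) : R :=
  match excluded_middle_informative (inhabited (Riemann_integrable f a b)) with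
  | left H => RiemannInt (epsilon H (fun _ => True))
  | right _ => 0
  end.

Definition is_restricted_inverse (delta dinv : R -> R) (t1 t2 : R) : Prop :=
  (forall t, 0 < t -> t1 < dinv t /\ delta (dinv t) = t) /\
  (forall t, t < 0 -> dinv t < - t2 /\ delta (dinv t) = t).

Definition penalty (dinv : R -> R) (theta : R) : R :=
  if Req_EM_T theta 0 then 0 else RInt (fun t => dinv t - t) 0 theta.

(* Each branch of the inverse of delta is extended continuously across 0 by its
   one-sided limit (t1, resp. -t2).  With these extensions the objective becomes
     1/2 x^2 + \int_0^{max theta 0} (dinv t - x) dt
             + \int_0^{min theta 0} (dinv t - x) dt.
   Since delta is nondecreasing and delta (dinv t) = t, the integrand has the sign of
   t - delta x for t <> 0, so the first integral is strictly minimized at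
   max (delta x) 0 and the second at min (delta x) 0; as theta is the sum of its
   positive and negative parts, delta x is the unique minimizer. *)

From Pilot Require Import Defs.
From Stdlib Require Import Reals Lra ClassicalEpsilon.
From Coquelicot Require Import Coquelicot.
Open Scope R_scope.

Lemma lt_of_nondecreasing (f : R -> R) :
  (forall u v, u <= v -> f u <= f v) -> forall u v, f u < f v -> u < v.
Proof.
  intros Hf u v Hfuv. destruct (Rlt_or_le u v) as [Huv|Hvu]; [exact Huv|].
  specialize (Hf v u Hvu). lra.
Qed.

Lemma continuity_pt_nondecreasing (h : R -> R) (t0 : R) :
  (forall u v, u <= v -> h u <= h v) ->
  (forall e, 0 < e ->
     exists u v, u < t0 < v /\ h t0 - e < h u /\ h v < h t0 + e) ->
  continuity_pt h t0.
Proof.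
  intros Hh Happrox.
  unfold continuity_pt, continue_in, limit1_in, limit_in; simpl; unfold R_dist.
  intros e He. destruct (Happrox e He) as (u & v & [Hu Hv] & Hlo & Hhi).
  exists (Rmin (t0 - u) (v - t0)). split; [apply Rmin_case; lra|].
  intros t [_ Ht]. apply Rabs_def2 in Ht.
  pose proof (Rmin_l (t0 - u) (v - t0)). pose proof (Rmin_r (t0 - u) (v - t0)).
  pose proof (Hh u t ltac:(lra)). pose proof (Hh t v ltac:(lra)).
  apply Rabs_def1; lra.
Qed.

Lemma continuous_sub_const (h : R -> R) (x t : R) :
  continuous h t -> continuous (fun u => h u - x) t.
Proof. intro Hh. exact (continuous_minus h (fun _ => x) t Hh (continuous_const x t)). Qed.

Lemma RInt_lt_of_sign_change (g : R -> R) (c a s : R) :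
  (forall t, continuous g t) -> s <> a ->
  (forall t, a < t < s -> 0 < g t) -> (forall t, s < t < a -> g t < 0) ->
  RInt g c a < RInt g c s.
Proof.
  intros Hg Hsa Hpos Hneg.
  assert (Hex : forall u v, ex_RInt g u v)
    by (intros; apply (ex_RInt_continuous (V := R_CompleteNormedModule)); auto).
  assert (Hzero : forall u v, RInt (fun _ => 0) u v = 0)
    by (intros; rewrite RInt_const; apply Rmult_0_r).
  rewrite <- (RInt_Chasles g c a s) by auto. change plus with Rplus.
  destruct (Rlt_or_le a s) as [Has|Hsa'].
  - assert (RInt (fun _ => 0) a s < RInt g a s)
      by (apply RInt_lt; auto using continuous_const).
    rewrite Hzero in *. lra.
  - assert (RInt g s a < RInt (fun _ => 0) s a)
      by (apply RInt_lt; auto using continuous_const; lra).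
    rewrite Hzero, <- opp_RInt_swap in * by auto. change opp with Ropp in *. lra.
Qed.

Lemma penalty_eq_RInt (dinv h : R -> R) (theta : R) :
  (forall t, continuous h t) ->
  (forall t, Rmin 0 theta < t < Rmax 0 theta -> h t = dinv t) ->
  penalty dinv theta = RInt (fun t => h t - t) 0 theta.
Proof.
  intros Hh Hagree. unfold penalty, Defs.RInt.
  destruct (Req_EM_T theta 0) as [->|_]; [now rewrite RInt_point|].
  assert (Hex : ex_RInt (fun t => dinv t - t) 0 theta).
  { apply (ex_RInt_ext (fun t => h t - t)); [intros t Ht; now rewrite Hagree|].
    apply (ex_RInt_continuous (V := R_CompleteNormedModule)). intros.
    exact (continuous_minus h (fun t => t) _ (Hh _) (continuous_id _)). }
  rewrite (RInt_ext (fun t => h t - t) (fun t => dinv t - t))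
    by (intros t Ht; now rewrite Hagree).
  destruct excluded_middle_informative as [Hri|Hnri].
  - symmetry. apply RInt_Reals.
  - exfalso. apply Hnri. constructor. now apply ex_RInt_Reals_0.
Qed.

Lemma quadratic_add_RInt_shift (h : R -> R) (x theta : R) :
  (forall t, continuous h t) ->
  / 2 * (x - theta) ^ 2 + RInt (fun t => h t - t) 0 theta =
  / 2 * x ^ 2 + RInt (fun t => h t - x) 0 theta.
Proof.
  intro Hh.
  assert (Hlin : is_RInt (fun t => x - t) 0 theta
                   (minus (x * theta - theta ^ 2 / 2) (x * 0 - 0 ^ 2 / 2))).
  { apply (is_RInt_derive (fun t => x * t - t ^ 2 / 2)).
    - intros t _; auto_derive; [exact I|]. field.
    - intros; exact (continuous_minus _ _ _ (continuous_const x _) (continuous_id _)). }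
  rewrite (RInt_ext (fun t => h t - t) (fun t => plus (h t - x) (x - t)))
    by (intros ? _; unfold plus; simpl; ring).
  rewrite (RInt_plus (V := R_CompleteNormedModule)).
  - change (RInt (Rminus x) 0 theta) with (RInt (fun t => x - t) 0 theta).
    rewrite (is_RInt_unique _ _ _ _ Hlin).
    change plus with Rplus. change minus with Rminus. field.
  - apply (ex_RInt_continuous (V := R_CompleteNormedModule)).
    intros; now apply continuous_sub_const.
  - now exists (minus (x * theta - theta ^ 2 / 2) (x * 0 - 0 ^ 2 / 2)).
Qed.

Lemma unique_minimizer_of_strict (F : R -> R) (a : R) :
  (forall theta, theta <> a -> F a < F theta) ->
  (forall theta, F a <= F theta) /\ (forall theta, F theta <= F a -> theta = a).
Proof.
  intro Hstrict. split; intro theta;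
    destruct (Req_dec theta a) as [->|Hne]; try lra;
    specialize (Hstrict theta Hne); lra.
Qed.

Section RightBranch.

Variables (f finv : R -> R) (s : R).
Hypothesis f_incr : forall u v, s < u -> u < v -> f u < f v.
Hypothesis f_pos : forall u, s < u -> 0 < f u.
Hypothesis finv_spec : forall t, 0 < t -> s < finv t /\ f (finv t) = t.

Definition right_branch (t : R) : R := if Rlt_dec 0 t then finv t else s.

Lemma right_branch_pos t : 0 < t -> right_branch t = finv t.
Proof. intro Ht. unfold right_branch. now destruct Rlt_dec. Qed.

Lemma right_branch_nonpos t : t <= 0 -> right_branch t = s.
Proof. intro Ht. unfold right_branch. destruct Rlt_dec; [lra|easy]. Qed.

Lemma finv_f u : s < u -> finv (f u) = u.
Proof.
  intro Hu. destruct (finv_spec (f u) (f_pos u Hu)) as [Hs Hf].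
  destruct (Rtotal_order (finv (f u)) u) as [Hlt|[Heq|Hgt]]; [|exact Heq|].
  - pose proof (f_incr _ _ Hs Hlt). lra.
  - pose proof (f_incr _ _ Hu Hgt). lra.
Qed.

Lemma right_branch_f u : s < u -> right_branch (f u) = u.
Proof. intro Hu. rewrite right_branch_pos by auto. now apply finv_f. Qed.

Lemma right_branch_nondecreasing u v : u <= v -> right_branch u <= right_branch v.
Proof.
  intro Huv. destruct (Rle_or_lt u 0) as [Hu|Hu].
  - rewrite (right_branch_nonpos u Hu). destruct (Rle_or_lt v 0) as [Hv|Hv].
    + rewrite right_branch_nonpos; lra.
    + rewrite right_branch_pos by lra. now apply Rlt_le, finv_spec.
  - rewrite !right_branch_pos by lra.
    destruct (finv_spec u Hu) as [Hsu Hfu].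
    destruct (finv_spec v ltac:(lra)) as [Hsv Hfv].
    destruct (Rle_or_lt (finv u) (finv v)) as [Hle|Hlt]; [exact Hle|].
    pose proof (f_incr _ _ Hsv Hlt). lra.
Qed.

Lemma right_branch_continuous t : continuous right_branch t.
Proof.
  apply continuity_pt_filterlim, continuity_pt_nondecreasing;
    [exact right_branch_nondecreasing|].
  intros e He.
  destruct (Rle_or_lt t 0) as [Ht|Ht].
  - rewrite (right_branch_nonpos t Ht).
    exists (t - 1), (f (s + e / 2)).
    rewrite right_branch_nonpos, right_branch_f by lra.
    pose proof (f_pos (s + e / 2) ltac:(lra)). lra.
  - destruct (finv_spec t Ht) as [Hs Hft].
    rewrite (right_branch_pos t Ht). set (y := finv t) in *.
    set (m := Rmin e (y - s) / 2).
    assert (Hm : 0 < m /\ m < e /\ m < y - s)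
      by (unfold m; pose proof (Rmin_l e (y - s)); pose proof (Rmin_r e (y - s));
          assert (0 < Rmin e (y - s)) by (apply Rmin_case; lra); lra).
    exists (f (y - m)), (f (y + e / 2)).
    rewrite !right_branch_f by lra.
    pose proof (f_incr (y - m) y ltac:(lra) ltac:(lra)).
    pose proof (f_incr y (y + e / 2) Hs ltac:(lra)). lra.
Qed.

End RightBranch.

Section PosteriorMedianThresholding.

Variables (delta dinv : R -> R) (t1 t2 : R).
Hypothesis delta_zero : forall x, delta x = 0 <-> - t2 <= x <= t1.
Hypothesis delta_incr_r : forall x y, t1 < x -> x < y -> delta x < delta y.
Hypothesis delta_incr_l : forall x y, x < y -> y < - t2 -> delta x < delta y.
Hypothesis delta_pos : forall x, t1 < x -> 0 < delta x.
Hypothesis delta_neg : forall x, x < - t2 -> delta x < 0.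
Hypothesis dinv_spec : is_restricted_inverse delta dinv t1 t2.

Lemma delta_nondecreasing u v : u <= v -> delta u <= delta v.
Proof.
  intro Huv.
  assert (Hle0 : forall x, x <= t1 -> delta x <= 0).
  { intros x Hx. destruct (Rlt_or_le x (- t2)).
    - now apply Rlt_le, delta_neg.
    - right. apply delta_zero. lra. }
  assert (Hge0 : forall x, - t2 <= x -> 0 <= delta x).
  { intros x Hx. destruct (Rlt_or_le t1 x).
    - now apply Rlt_le, delta_pos.
    - right. symmetry. apply delta_zero. lra. }
  destruct Huv as [Huv|<-]; [|lra].
  destruct (Rlt_or_le t1 u) as [Hu|Hu].
  - apply Rlt_le, delta_incr_r; lra.
  - destruct (Rlt_or_le v (- t2)) as [Hv|Hv].
    + apply Rlt_le, delta_incr_l; lra.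
    + specialize (Hle0 u Hu). specialize (Hge0 v Hv). lra.
Qed.

Lemma delta_dinv t : t <> 0 -> delta (dinv t) = t.
Proof.
  intro Ht. destruct dinv_spec as [Hr Hl].
  destruct (Rdichotomy t 0 Ht); [now apply Hl | now apply Hr].
Qed.

Lemma dinv_lt_of_lt x t : t <> 0 -> t < delta x -> dinv t < x.
Proof.
  intros Ht Htx. apply (lt_of_nondecreasing delta delta_nondecreasing).
  now rewrite delta_dinv.
Qed.

Lemma lt_dinv_of_lt x t : t <> 0 -> delta x < t -> x < dinv t.
Proof.
  intros Ht Hxt. apply (lt_of_nondecreasing delta delta_nondecreasing).
  now rewrite delta_dinv.
Qed.

Definition upper_branch : R -> R := right_branch dinv t1.

(* The reflection [x |-> - delta (- x)] turns the negative branch into a positive one. *)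
Definition lower_branch (t : R) : R :=
  - right_branch (fun u => - dinv (- u)) t2 (- t).

Lemma upper_branch_eq t : 0 < t -> upper_branch t = dinv t.
Proof. apply right_branch_pos. Qed.

Lemma lower_branch_eq t : t < 0 -> lower_branch t = dinv t.
Proof.
  intro Ht. unfold lower_branch. rewrite right_branch_pos by lra.
  now rewrite !Ropp_involutive.
Qed.

Lemma upper_branch_continuous t : continuous upper_branch t.
Proof.
  apply (right_branch_continuous delta); [exact delta_incr_r | exact delta_pos |].
  apply dinv_spec.
Qed.

Lemma lower_branch_continuous t : continuous lower_branch t.
Proof.
  apply (continuous_opp (fun t => right_branch _ t2 (- t))).
  apply (continuous_comp Ropp);
    [apply continuity_pt_filterlim, continuity_pt_opp, continuity_pt_id|].
  apply (right_branch_continuous (fun y => - delta (- y))).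
  - intros u v Hu Huv. apply Ropp_lt_contravar, delta_incr_l; lra.
  - intros u Hu. apply Ropp_0_gt_lt_contravar, delta_neg. lra.
  - intros u Hu. destruct (proj2 dinv_spec (- u) ltac:(lra)) as [Hlt Heq].
    rewrite Ropp_involutive, Heq. split; lra.
Qed.

Lemma objective_split x theta :
  / 2 * (x - theta) ^ 2 + penalty dinv theta =
  / 2 * x ^ 2 + RInt (fun t => upper_branch t - x) 0 (Rmax theta 0)
    + RInt (fun t => lower_branch t - x) 0 (Rmin theta 0).
Proof.
  destruct (Rle_or_lt 0 theta) as [Hth|Hth].
  - rewrite Rmax_left, Rmin_right, RInt_point by lra. change zero with 0.
    rewrite (penalty_eq_RInt dinv upper_branch), quadratic_add_RInt_shift;
      [ring | exact upper_branch_continuous | exact upper_branch_continuous |].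
    intros t Ht. rewrite Rmin_left, Rmax_right in Ht by lra.
    apply upper_branch_eq. lra.
  - rewrite Rmax_right, Rmin_left, RInt_point by lra. change zero with 0.
    rewrite (penalty_eq_RInt dinv lower_branch), quadratic_add_RInt_shift;
      [ring | exact lower_branch_continuous | exact lower_branch_continuous |].
    intros t Ht. rewrite Rmin_right, Rmax_left in Ht by lra.
    apply lower_branch_eq. lra.
Qed.

Lemma upper_part_minimized x theta :
  Rmax theta 0 <> Rmax (delta x) 0 ->
  RInt (fun t => upper_branch t - x) 0 (Rmax (delta x) 0)
    < RInt (fun t => upper_branch t - x) 0 (Rmax theta 0).
Proof.
  intro Hne. pose proof (Rmax_l (delta x) 0). pose proof (Rmax_r (delta x) 0).
  pose proof (Rmax_r theta 0).
  apply RInt_lt_of_sign_change; [|exact Hne| |].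
  - intro; apply continuous_sub_const, upper_branch_continuous.
  - intros t Ht. rewrite upper_branch_eq by lra.
    pose proof (lt_dinv_of_lt x t (Rgt_not_eq t 0 ltac:(lra)) ltac:(lra)). lra.
  - intros t Ht.
    assert (Htx : t < delta x)
      by (destruct (Rle_or_lt (delta x) 0);
          [rewrite (Rmax_right (delta x) 0) in Ht
          |rewrite (Rmax_left (delta x) 0) in Ht]; lra).
    rewrite upper_branch_eq by lra.
    pose proof (dinv_lt_of_lt x t (Rgt_not_eq t 0 ltac:(lra)) Htx). lra.
Qed.

Lemma lower_part_minimized x theta :
  Rmin theta 0 <> Rmin (delta x) 0 ->
  RInt (fun t => lower_branch t - x) 0 (Rmin (delta x) 0)
    < RInt (fun t => lower_branch t - x) 0 (Rmin theta 0).
Proof.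
  intro Hne. pose proof (Rmin_l (delta x) 0). pose proof (Rmin_r (delta x) 0).
  pose proof (Rmin_r theta 0).
  apply RInt_lt_of_sign_change; [|exact Hne| |].
  - intro; apply continuous_sub_const, lower_branch_continuous.
  - intros t Ht.
    assert (Htx : delta x < t)
      by (destruct (Rle_or_lt 0 (delta x));
          [rewrite (Rmin_right (delta x) 0) in Ht
          |rewrite (Rmin_left (delta x) 0) in Ht]; lra).
    rewrite lower_branch_eq by lra.
    pose proof (lt_dinv_of_lt x t (Rlt_not_eq t 0 ltac:(lra)) Htx). lra.
  - intros t Ht. rewrite lower_branch_eq by lra.
    pose proof (dinv_lt_of_lt x t (Rlt_not_eq t 0 ltac:(lra)) ltac:(lra)). lra.
Qed.

Lemma objective_strict_min x theta :
  theta <> delta x ->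
  / 2 * (x - delta x) ^ 2 + penalty dinv (delta x)
    < / 2 * (x - theta) ^ 2 + penalty dinv theta.
Proof.
  intro Hne. rewrite !objective_split.
  assert (Hsum : forall y, y = Rmax y 0 + Rmin y 0)
    by (intro y; destruct (Rle_or_lt 0 y);
        [rewrite Rmax_left, Rmin_right | rewrite Rmax_right, Rmin_left]; lra).
  destruct (Req_dec (Rmax theta 0) (Rmax (delta x) 0)) as [Hp|Hp];
    destruct (Req_dec (Rmin theta 0) (Rmin (delta x) 0)) as [Hm|Hm].
  - exfalso. apply Hne. rewrite (Hsum theta), (Hsum (delta x)). lra.
  - rewrite Hp. pose proof (lower_part_minimized x theta Hm). lra.
  - rewrite Hm. pose proof (upper_part_minimized x theta Hp). lra.
  - pose proof (lower_part_minimized x theta Hm).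
    pose proof (upper_part_minimized x theta Hp). lra.
Qed.

End PosteriorMedianThresholding.

Theorem mainTheorem6 (delta : R -> R) (t1 t2 : R) :
  0 < t1 -> 0 < t2 ->
  continuity delta ->
  (forall x, delta x = 0 <-> - t2 <= x <= t1) ->
  (forall x y, t1 < x -> x < y -> delta x < delta y) ->
  (forall x y, x < y -> y < - t2 -> delta x < delta y) ->
  (forall x, t1 < x -> 0 < delta x) ->
  (forall y, 0 < y -> exists x, t1 < x /\ delta x = y) ->
  (forall x, x < - t2 -> delta x < 0) ->
  (forall y, y < 0 -> exists x, x < - t2 /\ delta x = y) ->
  forall dinv : R -> R,
  is_restricted_inverse delta dinv t1 t2 ->
  forall x : R,
    (forall theta : R,
       / 2 * (x - delta x) ^ 2 + penalty dinv (delta x)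
       <= / 2 * (x - theta) ^ 2 + penalty dinv theta) /\
    (forall theta : R,
       / 2 * (x - theta) ^ 2 + penalty dinv theta
       <= / 2 * (x - delta x) ^ 2 + penalty dinv (delta x) ->
       theta = delta x).
Proof.
  (* The signs of t1, t2, the continuity of delta and the surjectivity hypotheses
     are not needed: the inverse branches are continuous by monotonicity alone. *)
  intros _ _ _ Hzero Hincr_r Hincr_l Hpos _ Hneg _ dinv Hdinv x.
  apply (unique_minimizer_of_strict
           (fun theta => / 2 * (x - theta) ^ 2 + penalty dinv theta)).
  intros theta Hne.
  exact (objective_strict_min delta dinv t1 t2 Hzero Hincr_r Hincr_l Hpos Hneg Hdinv
           x theta Hne).
Qed.
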